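(* For $\gamma\in(0,1)$ and $\varphi(x)=x^{1-\gamma}$, \[ \alpha_\varphi=\frac{1}{e\,\Gamma(\gamma)}\int_0^1\frac{e^x}{(-\log x)^{1-\gamma}}\,dx. \]
   Context: $\alpha_\varphi=\inf_{x\in\mathbb{Z}_{\ge1}}\frac{\mathbb{E}_{X\sim\mathrm{Pois}(x)}[\varphi(X)]}{\varphi(x)}$; $\Gamma$ is the Gamma function and $\log$ is the natural logarithm. *)

From Stdlib Require Import Reals.
From Coquelicot Require Import Coquelicot.
Open Scope R_scope.

(* phi(x) = x^(1-gamma), with phi(0) = 0 (Rpower is only meaningful for x > 0). *)
Definition phi (g x : R) : R := if Rle_dec x 0 then 0 else Rpower x (1 - g).

Definition pois_expect (x : R) (f : R -> R) : R :=
  Series (fun k : nat => exp (- x) * x ^ k / INR (Factorial.fact k) * f (INR k)).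

Definition alpha (f : R -> R) : Rbar :=
  Glb_Rbar (fun r => exists n : nat, (1 <= n)%nat /\
                      r = pois_expect (INR n) f / f (INR n)).

Definition Gamma (s : R) : R :=
  RInt_gen (fun t => Rpower t (s - 1) * exp (- t)) (at_right 0) (Rbar_locally p_infty).

From Stdlib Require Import Reals Lra Lia Psatz Classical.
From Coquelicot Require Import Coquelicot.
Open Scope R_scope.

(* The infimum is attained at x = 1.  For x >= 2, the tangent-line minorant
   K^(1-g) >= (x+1)^(-g) (K (1+g) - g K^2 / (x+1)) and the first two Poisson
   moments give E phi(X) / phi(x) >= (x / (x+1))^g >= (2/3)^g, while truncating
   the series at x = 1 after three terms bounds that ratio by (2/3)^g.
   At x = 1 the ratio is e^(-1) sum_j (j+1)^(-g) / j!.  Substituting x = e^(-t)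
   turns the integral into int_0^oo t^(g-1) e^(-t) exp(e^(-t)) dt; expanding
   exp(e^(-t)) and using int_0^oo t^(g-1) e^(-(j+1) t) dt = (j+1)^(-g) Gamma(g)
   identifies it with Gamma(g) sum_j (j+1)^(-g) / j!. *)

Lemma ln_le_sub1 z : 0 < z -> ln z <= z - 1.
Proof. intros Hz. generalize (exp_ineq1_le (ln z)). rewrite exp_ln; lra. Qed.

Lemma Rpower_pos x y : 0 < Rpower x y.
Proof. apply exp_pos. Qed.

Lemma Rpower_1_l y : Rpower 1 y = 1.
Proof. unfold Rpower. rewrite ln_1, Rmult_0_r. apply exp_0. Qed.

Lemma Rpower_Rinv x y : 0 < x -> Rpower (/ x) y = / Rpower x y.
Proof. intros Hx. unfold Rpower. rewrite ln_Rinv, <- exp_Ropp by lra. f_equal; ring. Qed.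

Lemma Rpower_le_nonpos a b r : 0 < a <= b -> r <= 0 -> Rpower b r <= Rpower a r.
Proof.
  intros Hab Hr.
  assert (Hinv : forall c, Rpower c r = / Rpower c (- r))
    by (intros c; now rewrite <- Rpower_Ropp, Ropp_involutive).
  rewrite !Hinv. apply Rinv_le_contravar; [apply Rpower_pos | apply Rle_Rpower_l; lra].
Qed.

Lemma Rpower_ge_tangent z r : 0 < z -> r <= 0 -> 1 + r * (z - 1) <= Rpower z r.
Proof.
  intros Hz Hr. generalize (exp_ineq1_le (r * ln z)) (ln_le_sub1 z Hz).
  unfold Rpower. nra.
Qed.

Lemma Rpower_le_tangent t g : 0 < t -> 0 < g < 1 -> Rpower t g <= 1 + g * (t - 1).
Proof.
  intros Ht Hg.
  set (s := Rpower t g). set (z := Rpower t (1 - g)).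
  assert (Hs : 0 < s) by apply Rpower_pos.
  assert (Ht_sz : t = s * z).
  { unfold s, z. rewrite <- Rpower_plus. replace (g + (1 - g)) with 1 by ring.
    now rewrite Rpower_1. }
  (* Bernoulli for z = t^(1-g) with exponent -g/(1-g), which turns z into 1/s. *)
  assert (Hz : 1 + - g / (1 - g) * (z - 1) <= / s).
  { replace (/ s) with (Rpower z (- g / (1 - g))).
    - apply Rpower_ge_tangent; [apply Rpower_pos|].
      assert (0 < / (1 - g)) by (apply Rinv_0_lt_compat; lra).
      unfold Rdiv. nra.
    - unfold z, s. rewrite Rpower_mult, <- Rpower_Ropp. f_equal. field. lra. }
  apply (Rmult_le_compat_l (s * (1 - g))) in Hz; [|nra].
  replace (s * (1 - g) * / s) with (1 - g) in Hz by (field; lra).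
  replace (s * (1 - g) * (1 + - g / (1 - g) * (z - 1))) with (s - g * (s * z))
    in Hz by (field; lra).
  rewrite Ht_sz. lra.
Qed.

Lemma exp_1_gt_27_10 : 27 / 10 < exp 1.
Proof. generalize (exp_ge_taylor 1 4 ltac:(lra)). simpl. lra. Qed.

Lemma exp_m1_lt_10_27 : exp (-1) < 10 / 27.
Proof.
  replace (-1) with (- (1)) by ring. rewrite exp_Ropp.
  assert (H := exp_1_gt_27_10).
  apply (Rmult_lt_reg_l (exp 1)); [lra|]. rewrite Rinv_r by lra. lra.
Qed.

Lemma three_term_poly_bound a X Z : 0 < a < 10 / 27 -> 1 <= X -> 0 < Z <= (5 - X) / 4 ->
  a * (X * X * Z + X * Z) + (1 - 2 * a) <= X.
Proof.
  intros Ha HX HZ.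
  assert (HZX : a * (X * X * Z + X * Z) <= a * (X * X + X) * ((5 - X) / 4)).
  { replace (a * (X * X * Z + X * Z)) with (a * (X * X + X) * Z) by ring.
    apply Rmult_le_compat_l; [nra | lra]. }
  (* X - (1 - 2a) - a (X^2 + X)(5 - X)/4 = (X - 1)(1 - a (8 + 3X - X^2)/4) *)
  assert (Hq : a * (8 + 3 * X - X * X) <= 4).
  { assert (Hsq : 8 + 3 * X - X * X <= 41 / 4) by (generalize (pow2_ge_0 (X - 3 / 2)); nra).
    apply Rmult_le_compat_l with (r := a) in Hsq; lra. }
  assert (0 <= (X - 1) * (4 - a * (8 + 3 * X - X * X))) by (apply Rmult_le_pos; lra).
  nra.
Qed.

Lemma three_term_bound_le g : 0 < g < 1 ->
  exp (-1) * (1 + Rpower 2 (- g)) + Rpower 3 (- g) * (1 - 2 * exp (-1)) <= Rpower (2 / 3) g.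
Proof.
  intros Hg.
  set (X := Rpower 2 g). set (Z := Rpower (3 / 4) g).
  assert (HX : X <= 1 + g) by (generalize (Rpower_le_tangent 2 g ltac:(lra) Hg); unfold X; lra).
  assert (HZ : Z <= 1 - g / 4)
    by (generalize (Rpower_le_tangent (3 / 4) g ltac:(lra) Hg); unfold Z; lra).
  assert (HX1 : 1 <= X).
  { unfold X. rewrite <- (Rpower_O 2) by lra. apply Rle_Rpower; lra. }
  assert (HZ0 : 0 < Z) by apply Rpower_pos.
  assert (E2 : Rpower 2 (- g) = / X) by apply Rpower_Ropp.
  assert (E3 : Rpower 3 (- g) = / (X * X * Z)).
  { rewrite Rpower_Ropp. unfold X, Z. rewrite !Rpower_mult_distr by lra. do 2 f_equal; lra. }
  assert (E23 : Rpower (2 / 3) g = / (X * Z)).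
  { unfold X, Z. rewrite Rpower_mult_distr by lra.
    replace (2 / 3) with (/ (2 * (3 / 4))) by field. apply Rpower_Rinv; lra. }
  rewrite E2, E3, E23.
  assert (Hpoly := three_term_poly_bound (exp (-1)) X Z
                     (conj (exp_pos _) exp_m1_lt_10_27) HX1 ltac:(split; lra)).
  assert (HXXZ : 0 < X * X * Z) by (apply Rmult_lt_0_compat; [nra | lra]).
  apply (Rmult_le_reg_r (X * X * Z)); [exact HXXZ|].
  replace ((exp (-1) * (1 + / X) + / (X * X * Z) * (1 - 2 * exp (-1))) * (X * X * Z))
    with (exp (-1) * (X * X * Z + X * Z) + (1 - 2 * exp (-1))) by (field; lra).
  replace (/ (X * Z) * (X * X * Z)) with X by (field; lra).
  exact Hpoly.
Qed.

Lemma is_series_le_lim (a b : nat -> R) (la lb : R) : is_series a la -> is_series b lb ->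
  (forall n, a n <= b n) -> la <= lb.
Proof.
  intros Ha Hb Hab. apply (is_lim_seq_le (sum_n a) (sum_n b) la lb); [|exact Ha|exact Hb].
  intros n. rewrite !sum_n_Reals. apply sum_Rle. intros; apply Hab.
Qed.

Lemma is_series_ext_R (a b : nat -> R) (l : R) :
  (forall n, a n = b n) -> is_series a l -> is_series b l.
Proof. exact (is_series_ext a b l). Qed.

Lemma is_series_Rmult_l c (a : nat -> R) (l : R) :
  is_series a l -> is_series (fun n => c * a n) (c * l).
Proof. exact (is_series_scal_l c a l). Qed.

Lemma is_series_Rplus (a b : nat -> R) (la lb : R) :
  is_series a la -> is_series b lb -> is_series (fun n => a n + b n) (la + lb).
Proof. exact (is_series_plus a b la lb). Qed.

Lemma is_series_Rminus (a b : nat -> R) (la lb : R) :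
  is_series a la -> is_series b lb -> is_series (fun n => a n - b n) (la - lb).
Proof. exact (is_series_minus a b la lb). Qed.

Lemma is_series_decr_1_0 (a : nat -> R) (l : R) :
  a 0%nat = 0 -> is_series (fun k => a (S k)) l -> is_series a l.
Proof.
  intros H0 H. apply is_series_decr_1. rewrite H0.
  match goal with |- is_series _ ?L => replace L with l; [exact H|] end.
  unfold plus, opp; simpl. ring.
Qed.

Lemma is_series_tail (a : nat -> R) (l : R) N : is_series a l ->
  is_series (fun k => a (S N + k)%nat) (l - sum_f_R0 a N).
Proof.
  intros H. apply is_series_incr_n; [lia|].
  match goal with |- is_series _ ?L => replace L with l; [exact H|] end.
  rewrite sum_n_Reals. simpl. unfold plus; simpl. ring.
Qed.

Lemma is_lim_seq_sum_f_R0 (a : nat -> R) (l : R) :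
  is_series a l -> is_lim_seq (fun N => sum_f_R0 a N) l.
Proof.
  intros H. apply is_lim_seq_ext with (sum_n a); [intros; apply sum_n_Reals | exact H].
Qed.

Lemma is_series_exp x : is_series (fun k => x ^ k / INR (Factorial.fact k)) (exp x).
Proof.
  generalize (is_exp_Reals x). apply is_series_ext_R.
  intros n. rewrite pow_n_pow. reflexivity.
Qed.

Lemma exp_sub_taylor_bounds y N : 0 <= y <= 1 ->
  0 <= exp y - sum_f_R0 (fun j => y ^ j / INR (Factorial.fact j)) N
    <= exp 1 - sum_f_R0 (fun j => 1 ^ j / INR (Factorial.fact j)) N.
Proof.
  intros Hy. split.
  - generalize (exp_ge_taylor y N (proj1 Hy)). lra.
  - apply (is_series_le_lim _ _ _ _ (is_series_tail _ _ N (is_series_exp y))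
                                   (is_series_tail _ _ N (is_series_exp 1))).
    intros n. apply Rmult_le_compat_r.
    + left; apply Rinv_0_lt_compat, INR_fact_lt_0.
    + apply pow_incr. exact Hy.
Qed.

Definition poisson_weight (x : R) (k : nat) : R :=
  exp (- x) * x ^ k / INR (Factorial.fact k).

Definition poisson_ratio (f : R -> R) (x : R) : R := pois_expect x f / f x.

Lemma pois_expect_weight x f :
  pois_expect x f = Series (fun k => poisson_weight x k * f (INR k)).
Proof. reflexivity. Qed.

Lemma poisson_weight_pos x k : 0 < x -> 0 < poisson_weight x k.
Proof.
  intros Hx. apply Rdiv_lt_0_compat; [|apply INR_fact_lt_0].
  apply Rmult_lt_0_compat; [apply exp_pos | now apply pow_lt].
Qed.

Lemma poisson_weight_S x k : poisson_weight x (S k) * INR (S k) = x * poisson_weight x k.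
Proof.
  unfold poisson_weight. rewrite fact_simpl, mult_INR. simpl pow.
  field. split; [apply INR_fact_neq_0 | apply not_0_INR; lia].
Qed.

Lemma poisson_weight_1 k : poisson_weight 1 k = exp (-1) / INR (Factorial.fact k).
Proof.
  unfold poisson_weight. rewrite pow1. replace (- (1)) with (-1) by ring.
  field. apply INR_fact_neq_0.
Qed.

Lemma is_series_poisson_weight x : is_series (poisson_weight x) 1.
Proof.
  replace 1 with (exp (- x) * exp x) by (rewrite <- exp_plus, Rplus_opp_l; apply exp_0).
  generalize (is_series_Rmult_l (exp (- x)) _ _ (is_series_exp x)). apply is_series_ext_R.
  intros n. unfold poisson_weight. field. apply INR_fact_neq_0.
Qed.

Lemma is_series_poisson_mean x : is_series (fun k => poisson_weight x k * INR k) x.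
Proof.
  apply is_series_decr_1_0; [simpl; ring|].
  generalize (is_series_Rmult_l x _ _ (is_series_poisson_weight x)). rewrite Rmult_1_r.
  apply is_series_ext_R. intros n. now rewrite poisson_weight_S.
Qed.

Lemma is_series_poisson_second_moment x :
  is_series (fun k => poisson_weight x k * INR k ^ 2) (x ^ 2 + x).
Proof.
  apply is_series_decr_1_0; [simpl; ring|].
  generalize (is_series_Rmult_l x _ _
                (is_series_Rplus _ _ _ _ (is_series_poisson_mean x) (is_series_poisson_weight x))).
  replace (x * (x + 1)) with (x ^ 2 + x) by ring.
  apply is_series_ext_R. intros n.
  replace (poisson_weight x (S n) * INR (S n) ^ 2)
    with (poisson_weight x (S n) * INR (S n) * INR (S n)) by ring.
  rewrite poisson_weight_S, S_INR. ring.
Qed.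

Section PowerFunction.

Variable g : R.
Hypothesis hg : 0 < g < 1.

Lemma phi_nonneg K : 0 <= phi g K.
Proof. unfold phi. destruct (Rle_dec K 0); [lra | left; apply Rpower_pos]. Qed.

Lemma phi_0 : phi g 0 = 0.
Proof. unfold phi. destruct (Rle_dec 0 0); lra. Qed.

Lemma phi_pos K : 0 < K -> phi g K = Rpower K (1 - g).
Proof. intros HK. unfold phi. destruct (Rle_dec K 0); [lra | reflexivity]. Qed.

Lemma phi_split K : 0 < K -> phi g K = K * Rpower K (- g).
Proof.
  intros HK. rewrite phi_pos by exact HK. replace (1 - g) with (1 + - g) by ring.
  now rewrite Rpower_plus, Rpower_1.
Qed.

Lemma phi_1 : phi g 1 = 1.
Proof. rewrite phi_pos by lra. apply Rpower_1_l. Qed.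

Lemma phi_INR_le k : phi g (INR k) <= INR k.
Proof.
  destruct k as [|k]; [change (INR 0) with 0; rewrite phi_0; lra|].
  assert (H1 : 1 <= INR (S k)) by (apply (le_INR 1); lia).
  rewrite phi_pos by lra. rewrite <- (Rpower_1 (INR (S k))) at 2 by lra.
  apply Rle_Rpower; lra.
Qed.

Lemma ex_series_poisson_phi x : 0 < x ->
  ex_series (fun k => poisson_weight x k * phi g (INR k)).
Proof.
  intros Hx.
  apply (@ex_series_le R_AbsRing R_CompleteNormedModule _ (fun k => poisson_weight x k * INR k)).
  - intros n. change (norm ?y) with (Rabs y).
    assert (Hw := poisson_weight_pos x n Hx).
    rewrite Rabs_pos_eq by (apply Rmult_le_pos; [lra | apply phi_nonneg]).
    apply Rmult_le_compat_l; [lra | apply phi_INR_le].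
  - exists x. apply is_series_poisson_mean.
Qed.

(* Tangent line of u^(-g) at u = 1, for u = K/(x+1); the scale x+1 makes the
   Poisson expectation of the minorant come out as exactly (x+1)^(-g) x. *)
Lemma phi_ge_quadratic x K : 0 < x -> 0 <= K ->
  Rpower (x + 1) (- g) * (K * (1 + g) - g * K ^ 2 / (x + 1)) <= phi g K.
Proof.
  intros Hx HK. set (c := Rpower (x + 1) (- g)).
  assert (Hc : 0 < c) by apply Rpower_pos.
  destruct (Req_dec K 0) as [->|HK0].
  - rewrite phi_0. replace (c * (0 * (1 + g) - g * 0 ^ 2 / (x + 1))) with 0 by (field; lra).
    lra.
  - assert (HKp : 0 < K) by lra.
    assert (Hu : 0 < K / (x + 1)) by (apply Rdiv_lt_0_compat; lra).
    assert (E : Rpower K (- g) = Rpower (K / (x + 1)) (- g) * c).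
    { unfold c. rewrite Rpower_mult_distr by lra. f_equal. field. lra. }
    rewrite phi_split, E by exact HKp.
    assert (Ht := Rpower_ge_tangent (K / (x + 1)) (- g) Hu ltac:(lra)).
    apply (Rmult_le_compat_l (K * c)) in Ht; [|nra].
    replace (c * (K * (1 + g) - g * K ^ 2 / (x + 1)))
      with (K * c * (1 + - g * (K / (x + 1) - 1))) by (field; lra).
    lra.
Qed.

Lemma pois_expect_phi_ge x : 0 < x -> Rpower (x + 1) (- g) * x <= pois_expect x (phi g).
Proof.
  intros Hx. set (c := Rpower (x + 1) (- g)).
  assert (Hmin : is_series
            (fun k => poisson_weight x k * (c * (INR k * (1 + g) - g * INR k ^ 2 / (x + 1))))
            (c * x)).
  { generalize (is_series_Rminus _ _ _ _
                  (is_series_Rmult_l (c * (1 + g)) _ _ (is_series_poisson_mean x))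
                  (is_series_Rmult_l (c * g / (x + 1)) _ _ (is_series_poisson_second_moment x))).
    replace (c * (1 + g) * x - c * g / (x + 1) * (x ^ 2 + x)) with (c * x) by (field; lra).
    apply is_series_ext_R. intros n. field. lra. }
  rewrite pois_expect_weight.
  apply (is_series_le_lim _ _ _ _ Hmin (Series_correct _ (ex_series_poisson_phi x Hx))).
  intros n. apply Rmult_le_compat_l; [left; now apply poisson_weight_pos|].
  apply phi_ge_quadratic; [lra | apply pos_INR].
Qed.

Lemma poisson_ratio_ge x : 2 <= x -> Rpower (2 / 3) g <= poisson_ratio (phi g) x.
Proof.
  intros Hx. unfold poisson_ratio. rewrite (phi_pos x) by lra.
  assert (Hp : 0 < Rpower x (1 - g)) by apply Rpower_pos.
  apply Rle_trans with (Rpower (x + 1) (- g) * x / Rpower x (1 - g)).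
  2:{ apply Rmult_le_compat_r; [left; now apply Rinv_0_lt_compat|].
      apply pois_expect_phi_ge; lra. }
  replace (Rpower (x + 1) (- g) * x / Rpower x (1 - g)) with (Rpower (x / (x + 1)) g).
  - apply Rle_Rpower_l; [lra|]. split; [lra|].
    apply (Rmult_le_reg_r (3 * (x + 1))); [lra|]. field_simplify; lra.
  - unfold Rdiv. apply (Rmult_eq_reg_r (Rpower x (1 - g))); [|lra].
    rewrite Rmult_assoc, Rinv_l, Rmult_1_r by lra.
    assert (Hinv : 0 < / (x + 1)) by (apply Rinv_0_lt_compat; lra).
    rewrite <- Rpower_mult_distr, Rpower_Rinv, <- Rpower_Ropp by lra.
    replace (Rpower x g * Rpower (x + 1) (- g) * Rpower x (1 - g))
      with (Rpower x (g + (1 - g)) * Rpower (x + 1) (- g)) by (rewrite Rpower_plus; ring).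
    replace (g + (1 - g)) with 1 by ring. rewrite Rpower_1 by lra. ring.
Qed.

Lemma poisson_ratio_1_le :
  poisson_ratio (phi g) 1
    <= exp (-1) * (1 + Rpower 2 (- g)) + Rpower 3 (- g) * (1 - 2 * exp (-1)).
Proof.
  unfold poisson_ratio. rewrite phi_1, Rdiv_1_r, pois_expect_weight.
  rewrite (Series_incr_n _ 3) by (lia || (apply ex_series_poisson_phi; lra)).
  assert (Hhead : sum_f_R0 (fun k => poisson_weight 1 k * phi g (INR k)) (Init.Nat.pred 3)
                  = exp (-1) * (1 + Rpower 2 (- g))).
  { simpl. rewrite !poisson_weight_1, phi_0, phi_1.
    replace (1 + 1) with 2 by ring. rewrite phi_split by lra. simpl. field. }
  assert (Hmean : is_series (fun k => poisson_weight 1 (3 + k) * INR (3 + k))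
                            (1 - 2 * exp (-1))).
  { replace (1 - 2 * exp (-1)) with (1 - sum_f_R0 (fun k => poisson_weight 1 k * INR k) 2).
    - apply is_series_tail, is_series_poisson_mean.
    - simpl. rewrite !poisson_weight_1. simpl. field. }
  (* Beyond the first three terms, k^(1-g) = k k^(-g) <= k 3^(-g). *)
  assert (Htail : Series (fun k => poisson_weight 1 (3 + k) * phi g (INR (3 + k)))
                  <= Rpower 3 (- g) * (1 - 2 * exp (-1))).
  { rewrite <- (is_series_unique _ _ (is_series_Rmult_l (Rpower 3 (- g)) _ _ Hmean)).
    apply Series_le; [|eexists; apply is_series_Rmult_l, Hmean].
    intros n. assert (Hw := poisson_weight_pos 1 (3 + n) Rlt_0_1).
    assert (HK : 3 <= INR (3 + n)) by (rewrite plus_INR; simpl; generalize (pos_INR n); lra).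
    split; [apply Rmult_le_pos; [lra | apply phi_nonneg]|].
    rewrite phi_split by lra.
    assert (Hpow : Rpower (INR (3 + n)) (- g) <= Rpower 3 (- g))
      by (apply Rpower_le_nonpos; lra).
    assert (0 <= poisson_weight 1 (3 + n) * INR (3 + n)) by nra.
    nra. }
  lra.
Qed.

Definition frac_moment_coef (j : nat) : R := Rpower (INR j + 1) (- g) / INR (Factorial.fact j).

Lemma ex_series_frac_moment_coef : ex_series frac_moment_coef.
Proof.
  apply (@ex_series_le R_AbsRing R_CompleteNormedModule _
           (fun j => 1 ^ j / INR (Factorial.fact j))); [|exists (exp 1); apply is_series_exp].
  intros n. change (norm ?y) with (Rabs y). unfold frac_moment_coef.
  assert (Hfact : 0 < / INR (Factorial.fact n)) by apply Rinv_0_lt_compat, INR_fact_lt_0.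
  assert (Hle : Rpower (INR n + 1) (- g) <= 1).
  { rewrite <- (Rpower_1_l (- g)) at 2.
    apply Rpower_le_nonpos; [generalize (pos_INR n)|]; lra. }
  rewrite Rabs_pos_eq, pow1.
  - apply Rmult_le_compat_r; lra.
  - apply Rmult_le_pos; [left; apply Rpower_pos | lra].
Qed.

Lemma poisson_ratio_1 : poisson_ratio (phi g) 1 = exp (-1) * Series frac_moment_coef.
Proof.
  unfold poisson_ratio. rewrite phi_1, Rdiv_1_r, pois_expect_weight.
  rewrite Series_incr_1 by (apply ex_series_poisson_phi; lra).
  change (INR 0) with 0. rewrite phi_0, Rmult_0_r, Rplus_0_l, <- Series_scal_l.
  apply Series_ext. intros k.
  rewrite poisson_weight_1, phi_split by (apply lt_0_INR; lia).
  unfold frac_moment_coef. rewrite fact_simpl, mult_INR, S_INR.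
  field. split; [apply INR_fact_neq_0 | generalize (pos_INR k); lra].
Qed.

Lemma poisson_ratio_min n : (1 <= n)%nat ->
  poisson_ratio (phi g) 1 <= poisson_ratio (phi g) (INR n).
Proof.
  intros Hn. destruct (Nat.eq_dec n 1) as [->|Hn1]; [apply Rle_refl|].
  apply Rle_trans with (Rpower (2 / 3) g).
  - eapply Rle_trans; [apply poisson_ratio_1_le | apply three_term_bound_le, hg].
  - apply poisson_ratio_ge. apply (le_INR 2). lia.
Qed.

End PowerFunction.

Lemma at_right_intro a d (P : R -> Prop) : 0 < d ->
  (forall y, a < y < a + d -> P y) -> at_right a P.
Proof.
  intros Hd H. exists (mkposreal d Hd). intros y Hy Hay.
  change (Rabs (y - a) < d) in Hy. apply Rabs_def2 in Hy. apply H. lra.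
Qed.

Lemma at_left_intro b d (P : R -> Prop) : 0 < d ->
  (forall y, b - d < y < b -> P y) -> at_left b P.
Proof.
  intros Hd H. exists (mkposreal d Hd). intros y Hy Hyb.
  change (Rabs (y - b) < d) in Hy. apply Rabs_def2 in Hy. apply H. lra.
Qed.

Lemma at_right_elim a (P : R -> Prop) : at_right a P ->
  exists d, 0 < d /\ forall y, a < y < a + d -> P y.
Proof.
  intros [d Hd]. exists d. split; [apply cond_pos|]. intros y Hy. apply Hd; [|lra].
  change (Rabs (y - a) < d). rewrite Rabs_pos_eq; lra.
Qed.

Lemma filter_prod_0_pinfty (P : R -> R -> Prop) a0 b0 : 0 < a0 ->
  (forall a b, 0 < a < a0 -> b0 < b -> P a b) ->
  filter_prod (at_right 0) (Rbar_locally p_infty) (fun ab => P (fst ab) (snd ab)).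
Proof.
  intros Ha0 H. apply (Filter_prod _ _ _ (fun a => 0 < a < a0) (fun b => b0 < b)).
  - apply (at_right_intro 0 a0); [exact Ha0 | intros; lra].
  - now exists b0.
  - intros a b Ha Hb. now apply H.
Qed.

Lemma filter_prod_open_interval {Fa Fb : (R -> Prop) -> Prop} l u (P : R -> Prop) :
  Fa (fun a => l < a < u) -> Fb (fun b => l < b < u) -> (forall x, l < x < u -> P x) ->
  filter_prod Fa Fb
    (fun ab => forall x, Rmin (fst ab) (snd ab) <= x <= Rmax (fst ab) (snd ab) -> P x).
Proof.
  intros Ha Hb HP. apply (Filter_prod _ _ _ _ _ Ha Hb).
  intros a b Ha' Hb' x Hx. apply HP. simpl in Hx.
  unfold Rmin, Rmax in Hx. destruct (Rle_dec a b); lra.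
Qed.

Lemma filterlim_Rmult_at_right_0 c : 0 < c ->
  filterlim (fun t => c * t) (at_right 0) (at_right 0).
Proof.
  intros Hc P HP. destruct (at_right_elim 0 P HP) as (d & Hd & HdP).
  apply (at_right_intro 0 (d / c)); [now apply Rdiv_lt_0_compat|].
  intros t Ht. apply HdP.
  assert (c * (d / c) = d) by (field; lra). nra.
Qed.

Lemma filterlim_Rmult_pinfty c : 0 < c ->
  filterlim (fun t => c * t) (Rbar_locally p_infty) (Rbar_locally p_infty).
Proof.
  intros Hc P [M HM]. exists (M / c). intros t Ht. apply HM.
  assert (c * (M / c) = M) by (field; lra). nra.
Qed.

Lemma filterlim_opp_ln_at_right_0 :
  filterlim (fun x => - ln x) (at_right 0) (Rbar_locally p_infty).
Proof.
  intros P [M HM]. apply (is_lim_ln_0 (fun y => P (- y))).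
  exists (- M). intros y Hy. apply HM. lra.
Qed.

Lemma filterlim_opp_ln_at_left_1 : filterlim (fun x => - ln x) (at_left 1) (at_right 0).
Proof.
  intros P HP. destruct (at_right_elim 0 P HP) as (d & Hd & HdP).
  assert (Hed : 0 < exp (- d) < 1)
    by (split; [apply exp_pos | rewrite <- exp_0; apply exp_increasing; lra]).
  apply (at_left_intro 1 (1 - exp (- d))); [lra|]. intros x Hx. apply HdP.
  assert (ln x < 0) by (rewrite <- ln_1; apply ln_increasing; lra).
  assert (- d < ln x) by (rewrite <- (ln_exp (- d)); apply ln_increasing; lra).
  lra.
Qed.

Lemma is_RInt_gen_iff (f : R -> R) {Fa Fb : (R -> Prop) -> Prop}
  {FFa : Filter Fa} {FFb : Filter Fb} l :
  is_RInt_gen f Fa Fb l <->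
  forall eps : posreal, filter_prod Fa Fb
    (fun ab => exists z, is_RInt f (fst ab) (snd ab) z /\ Rabs (z - l) < eps).
Proof. unfold is_RInt_gen. rewrite filterlimi_locally. reflexivity. Qed.

Lemma is_RInt_gen_comp (f u du : R -> R) {Fa Fb Ga Gb : (R -> Prop) -> Prop}
  {FFa : Filter Fa} {FFb : Filter Fb} {FGa : Filter Ga} {FGb : Filter Gb} l :
  filter_prod Fa Fb (fun ab => forall x, Rmin (fst ab) (snd ab) <= x <= Rmax (fst ab) (snd ab) ->
    continuous f (u x) /\ is_derive u x (du x) /\ continuous du x) ->
  filterlim u Fa Ga -> filterlim u Fb Gb -> is_RInt_gen f Ga Gb l ->
  is_RInt_gen (fun y => du y * f (u y)) Fa Fb l.
Proof.
  intros Hreg Ha Hb Hl. apply (proj2 (is_RInt_gen_iff _ _)). intros eps.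
  destruct (proj1 (is_RInt_gen_iff f l) Hl eps) as [Q S HQ HS HQS].
  assert (HQS' : filter_prod Fa Fb (fun ab => Q (u (fst ab)) /\ S (u (snd ab)))).
  { apply (Filter_prod _ _ _ (fun a => Q (u a)) (fun b => S (u b)));
      [apply Ha, HQ | apply Hb, HS | now intros]. }
  generalize (filter_and _ _ Hreg HQS'). apply filter_imp.
  intros [a b] [Hab [Ha' Hb']]. simpl in *.
  destruct (HQS _ _ Ha' Hb') as (z & Hz & Hzl). exists z. split; [|exact Hzl].
  rewrite <- (is_RInt_unique f (u a) (u b) z Hz).
  apply (@is_RInt_comp R_CompleteNormedModule f u du a b).
  - intros x Hx. apply (Hab x Hx).
  - intros x Hx. split; apply (Hab x Hx).
Qed.

Lemma is_RInt_gen_lim_approx {Fa Fb : (R -> Prop) -> Prop}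
  {PFa : ProperFilter Fa} {PFb : ProperFilter Fb}
  (f h : R -> R) (p : nat -> R -> R) (e A : nat -> R) (lf lh L : R) :
  filter_prod Fa Fb (fun ab => fst ab <= snd ab) ->
  (forall N, filter_prod Fa Fb (fun ab => forall x, fst ab <= x <= snd ab ->
                                  Rabs (f x - p N x) <= e N * h x)) ->
  is_RInt_gen f Fa Fb lf -> is_RInt_gen h Fa Fb lh ->
  (forall N, is_RInt_gen (p N) Fa Fb (A N)) ->
  is_lim_seq A L -> is_lim_seq e 0 -> lf = L.
Proof.
  intros Hab Hbound Hf Hh Hp HA He.
  assert (Hdiff : forall N, Rabs (lf - A N) <= e N * lh).
  { intros N. apply (RInt_gen_norm (V := R_CompleteNormedModule)
                       (fun x => minus (f x) (p N x)) (fun x => e N * h x) _ _ Hab (Hbound N)).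
    - exact (is_RInt_gen_minus f (p N) lf (A N) Hf (Hp N)).
    - exact (is_RInt_gen_scal h (e N) lh Hh). }
  assert (Herr : is_lim_seq (fun N => e N * lh) 0).
  { replace (Finite 0) with (Rbar_mult 0 lh) by (simpl; now rewrite Rmult_0_l).
    now apply is_lim_seq_scal_r. }
  assert (Hto0 : is_lim_seq (fun N => lf - A N) 0).
  { apply (is_lim_seq_le_le (fun N => - (e N * lh)) _ (fun N => e N * lh));
      [intros N; now apply Rabs_le_between | | exact Herr].
    replace (Finite 0) with (Rbar_opp 0) by (simpl; now rewrite Ropp_0).
    exact (proj1 (is_lim_seq_opp _ _) Herr). }
  assert (HtoL : is_lim_seq (fun N => lf - A N) (lf - L))
    by (apply is_lim_seq_minus'; [apply is_lim_seq_const | exact HA]).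
  apply is_lim_seq_unique in Hto0. apply is_lim_seq_unique in HtoL.
  rewrite Hto0 in HtoL. injection HtoL. lra.
Qed.

Section PositiveHalfLine.

Variable f : R -> R.
Hypothesis f_cont : forall x, 0 < x -> continuous f x.

Lemma ex_RInt_pos a b : 0 < a -> 0 < b -> ex_RInt f a b.
Proof.
  intros Ha Hb. apply (@ex_RInt_continuous R_CompleteNormedModule). intros x Hx.
  apply f_cont. unfold Rmin in Hx. destruct (Rle_dec a b); lra.
Qed.

Hypothesis f_nonneg : forall x, 0 < x -> 0 <= f x.

Lemma RInt_le_superset a b a' b' : 0 < a' <= a -> a <= b <= b' ->
  RInt f a b <= RInt f a' b'.
Proof.
  intros Ha Hb.
  rewrite <- (@RInt_Chasles R_CompleteNormedModule f a' a b'),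
          <- (@RInt_Chasles R_CompleteNormedModule f a b b') by (apply ex_RInt_pos; lra).
  assert (0 <= RInt f a' a)
    by (apply RInt_ge_0; [lra | apply ex_RInt_pos; lra | intros; apply f_nonneg; lra]).
  assert (0 <= RInt f b b')
    by (apply RInt_ge_0; [lra | apply ex_RInt_pos; lra | intros; apply f_nonneg; lra]).
  unfold plus; simpl. lra.
Qed.

Lemma is_RInt_gen_nonneg_bounded M :
  (forall a b, 0 < a <= b -> RInt f a b <= M) ->
  exists l, is_RInt_gen f (at_right 0) (Rbar_locally p_infty) l /\
            forall a b, 0 < a <= b -> RInt f a b <= l.
Proof.
  intros HM.
  set (E := fun r : R => exists a b, 0 < a <= b /\ r = RInt f a b).
  destruct (completeness E) as [l [Hub Hlub]].
  { exists M. intros r (a & b & Hab & ->). now apply HM. }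
  { exists (RInt f 1 1), 1, 1. split; [lra | reflexivity]. }
  assert (Hle : forall a b, 0 < a <= b -> RInt f a b <= l)
    by (intros a b Hab; apply Hub; now exists a, b).
  exists l. split; [|exact Hle].
  apply (proj2 (is_RInt_gen_iff _ _)). intros eps.
  assert (Hnear : exists a0 b0, 0 < a0 <= b0 /\ l - eps < RInt f a0 b0).
  { apply NNPP. intros Hn.
    assert (Hlb : l <= l - eps).
    { apply Hlub. intros r (a & b & Hab & ->). apply Rnot_lt_le. intros Hlt.
      apply Hn. now exists a, b. }
    generalize (cond_pos eps). lra. }
  destruct Hnear as (a0 & b0 & Hab0 & Hlt).
  apply (filter_prod_0_pinfty
           (fun a b => exists z, is_RInt f a b z /\ Rabs (z - l) < eps) a0 b0); [lra|].
  intros a b Ha Hb.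
  exists (RInt f a b). split.
  - apply (@RInt_correct R_CompleteNormedModule), ex_RInt_pos; lra.
  - assert (RInt f a0 b0 <= RInt f a b) by (apply RInt_le_superset; lra).
    assert (RInt f a b <= l) by (apply Hle; lra).
    rewrite Rabs_left1 by lra. lra.
Qed.

End PositiveHalfLine.

Lemma is_RInt_gen_ext_pos (f h : R -> R) (l l' : R) : (forall x, 0 < x -> f x = h x) -> l = l' ->
  is_RInt_gen f (at_right 0) (Rbar_locally p_infty) l ->
  is_RInt_gen h (at_right 0) (Rbar_locally p_infty) l'.
Proof.
  intros Hfh <-. apply is_RInt_gen_ext.
  apply (filter_prod_0_pinfty (fun a b => forall x, Rmin a b < x < Rmax a b -> f x = h x)
           1 1 Rlt_0_1).
  intros a b Ha Hb x Hx.
  apply Hfh. rewrite Rmin_left in Hx; lra.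
Qed.

Lemma continuous_Rpower_l y t : 0 < t -> continuous (fun x => Rpower x y) t.
Proof.
  intros Ht. apply (@ex_derive_continuous R_AbsRing R_NormedModule).
  exists (y * Rpower t (y - 1)). apply is_derive_Reals, derivable_pt_lim_power, Ht.
Qed.

Lemma exp_INR_mul n x : exp (INR n * x) = exp x ^ n.
Proof.
  induction n as [|n IH]; [simpl; rewrite Rmult_0_l; apply exp_0|].
  rewrite S_INR, Rmult_plus_distr_r, Rmult_1_l, exp_plus, IH. simpl. ring.
Qed.

Section GammaIntegrals.

Variable g : R.
Hypothesis hg : 0 < g < 1.

Definition gamma_density (t : R) : R := Rpower t (g - 1) * exp (- t).

Lemma gamma_density_pos t : 0 < gamma_density t.
Proof. apply Rmult_lt_0_compat; [apply Rpower_pos | apply exp_pos]. Qed.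

Lemma continuous_gamma_density t : 0 < t -> continuous gamma_density t.
Proof.
  intros Ht. apply (continuous_mult (fun x => Rpower x (g - 1)) (fun x => exp (- x))).
  - now apply continuous_Rpower_l.
  - apply (@ex_derive_continuous R_AbsRing R_NormedModule). auto_derive. auto.
Qed.

Lemma is_RInt_Rpower_pred a : 0 < a <= 1 ->
  is_RInt (fun t => Rpower t (g - 1)) a 1 ((1 - Rpower a g) / g).
Proof.
  intros Ha.
  replace ((1 - Rpower a g) / g) with (minus (/ g * Rpower 1 g) (/ g * Rpower a g))
    by (unfold minus, plus, opp; simpl; rewrite Rpower_1_l; field; lra).
  apply (@is_RInt_derive R_CompleteNormedModule (fun t => / g * Rpower t g)).
  - intros x Hx. rewrite Rmin_left in Hx by lra.
    replace (Rpower x (g - 1)) with (/ g * (g * Rpower x (g - 1))) by (field; lra).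
    apply is_derive_scal, is_derive_Reals, derivable_pt_lim_power. lra.
  - intros x Hx. rewrite Rmin_left in Hx by lra. apply continuous_Rpower_l. lra.
Qed.

Lemma is_RInt_exp_opp b : is_RInt (fun t => exp (- t)) 1 b (exp (-1) - exp (- b)).
Proof.
  replace (exp (-1) - exp (- b)) with (minus (- exp (- b)) (- exp (- (1))))
    by (unfold minus, plus, opp; simpl; replace (- (1)) with (-1) by ring; ring).
  apply (@is_RInt_derive R_CompleteNormedModule (fun t => - exp (- t))).
  - intros x _. auto_derive; [auto | ring].
  - intros x _. apply (@ex_derive_continuous R_AbsRing R_NormedModule). auto_derive. auto.
Qed.

Lemma ex_RInt_gamma_density a b : 0 < a -> 0 < b -> ex_RInt gamma_density a b.
Proof. apply ex_RInt_pos, continuous_gamma_density. Qed.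

Lemma RInt_gamma_density_0_1_le a : 0 < a <= 1 -> RInt gamma_density a 1 <= 1 / g.
Proof.
  intros Ha.
  apply Rle_trans with (RInt (fun t => Rpower t (g - 1)) a 1).
  - apply RInt_le; [lra | apply ex_RInt_gamma_density; lra
                   | eexists; apply is_RInt_Rpower_pred; lra|].
    intros x Hx. unfold gamma_density.
    assert (0 < Rpower x (g - 1)) by apply Rpower_pos.
    assert (exp (- x) <= 1) by (rewrite <- exp_0; left; apply exp_increasing; lra).
    nra.
  - rewrite (is_RInt_unique _ _ _ _ (is_RInt_Rpower_pred a Ha)).
    assert (0 < Rpower a g / g) by (apply Rdiv_lt_0_compat; [apply Rpower_pos | lra]).
    unfold Rdiv in *. lra.
Qed.

Lemma RInt_gamma_density_1_le b : 1 <= b -> RInt gamma_density 1 b <= 1.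
Proof.
  intros Hb.
  apply Rle_trans with (RInt (fun t => exp (- t)) 1 b).
  - apply RInt_le; [lra | apply ex_RInt_gamma_density; lra | eexists; apply is_RInt_exp_opp|].
    intros x Hx. unfold gamma_density.
    assert (Rpower x (g - 1) <= Rpower 1 (g - 1)) by (apply Rpower_le_nonpos; lra).
    rewrite Rpower_1_l in *.
    assert (0 < exp (- x)) by apply exp_pos. nra.
  - rewrite (is_RInt_unique _ _ _ _ (is_RInt_exp_opp b)).
    assert (0 < exp (- b)) by apply exp_pos.
    assert (exp (-1) < 1) by (rewrite <- exp_0; apply exp_increasing; lra). lra.
Qed.

Lemma RInt_gamma_density_le a b : 0 < a <= b -> RInt gamma_density a b <= 1 / g + 1.
Proof.
  intros Hab.
  set (a' := Rmin a 1). set (b' := Rmax b 1).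
  assert (Ha' : 0 < a' <= 1 /\ a' <= a) by (unfold a', Rmin; destruct (Rle_dec a 1); lra).
  assert (Hb' : 1 <= b' /\ b <= b') by (unfold b', Rmax; destruct (Rle_dec b 1); lra).
  apply Rle_trans with (RInt gamma_density a' b').
  { apply RInt_le_superset; [exact continuous_gamma_density | | lra | lra].
    intros; left; apply gamma_density_pos. }
  rewrite <- (@RInt_Chasles R_CompleteNormedModule gamma_density a' 1 b')
    by (apply ex_RInt_gamma_density; lra).
  assert (H0 := RInt_gamma_density_0_1_le a' (proj1 Ha')).
  assert (H1 := RInt_gamma_density_1_le b' (proj1 Hb')).
  unfold plus; simpl. lra.
Qed.

Lemma gamma_integral_exists :
  exists l, is_RInt_gen gamma_density (at_right 0) (Rbar_locally p_infty) l /\ 0 < l.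
Proof.
  destruct (is_RInt_gen_nonneg_bounded gamma_density continuous_gamma_density
              (fun t _ => Rlt_le _ _ (gamma_density_pos t)) (1 / g + 1)
              RInt_gamma_density_le) as (l & Hl & Hup).
  exists l. split; [exact Hl|].
  apply Rlt_le_trans with (RInt gamma_density 1 2); [|apply Hup; lra].
  apply RInt_gt_0; [lra | intros; apply gamma_density_pos |].
  intros x Hx. apply continuous_gamma_density. lra.
Qed.

Lemma Gamma_unique (l : R) :
  is_RInt_gen gamma_density (at_right 0) (Rbar_locally p_infty) l -> Gamma g = l.
Proof. exact (is_RInt_gen_unique (V := R_CompleteNormedModule) gamma_density l). Qed.

Lemma is_RInt_gen_Gamma :
  is_RInt_gen gamma_density (at_right 0) (Rbar_locally p_infty) (Gamma g).
Proof. destruct gamma_integral_exists as (l & Hl & _). now rewrite (Gamma_unique l Hl). Qed.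

Lemma Gamma_pos : 0 < Gamma g.
Proof. destruct gamma_integral_exists as (l & Hl & Hpos). now rewrite (Gamma_unique l Hl). Qed.

Lemma is_RInt_gen_Gamma_scaled c : 0 < c ->
  is_RInt_gen (fun t => Rpower t (g - 1) * exp (- (c * t)))
    (at_right 0) (Rbar_locally p_infty) (Rpower c (- g) * Gamma g).
Proof.
  intros Hc.
  assert (Hsub : is_RInt_gen (fun t => c * gamma_density (c * t))
                   (at_right 0) (Rbar_locally p_infty) (Gamma g)).
  { apply (is_RInt_gen_comp gamma_density (fun t => c * t) (fun _ => c)
             (Ga := at_right 0) (Gb := Rbar_locally p_infty)).
    - apply (filter_prod_0_pinfty (fun a b => forall x, Rmin a b <= x <= Rmax a b ->
               continuous gamma_density (c * x) /\ is_derive (fun t => c * t) x c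
               /\ continuous (fun _ => c) x) 1 1 Rlt_0_1).
      intros a b Ha Hb x Hx. rewrite Rmin_left in Hx by lra.
      split; [apply continuous_gamma_density; nra|].
      split; [auto_derive; [auto | ring] | apply continuous_const].
    - now apply filterlim_Rmult_at_right_0.
    - now apply filterlim_Rmult_pinfty.
    - exact is_RInt_gen_Gamma. }
  apply (is_RInt_gen_scal _ (Rpower c (- g))) in Hsub.
  revert Hsub. apply is_RInt_gen_ext_pos; [|reflexivity].
  intros t Ht. unfold scal; simpl; unfold mult; simpl. unfold gamma_density.
  rewrite <- Rpower_mult_distr by lra.
  replace (Rpower c (- g) * (c * (Rpower c (g - 1) * Rpower t (g - 1) * exp (- (c * t)))))
    with (Rpower c (- g + 1 + (g - 1)) * (Rpower t (g - 1) * exp (- (c * t))))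
    by (rewrite !Rpower_plus, Rpower_1 by lra; ring).
  replace (- g + 1 + (g - 1)) with 0 by ring. rewrite Rpower_O by lra. ring.
Qed.

Lemma is_RInt_gen_gamma_density_term j :
  is_RInt_gen (fun t => gamma_density t * (exp (- t) ^ j / INR (Factorial.fact j)))
    (at_right 0) (Rbar_locally p_infty) (Gamma g * frac_moment_coef g j).
Proof.
  assert (Hj : 0 < INR j + 1) by (generalize (pos_INR j); lra).
  generalize (is_RInt_gen_scal _ (/ INR (Factorial.fact j)) _
                (is_RInt_gen_Gamma_scaled (INR j + 1) Hj)).
  apply is_RInt_gen_ext_pos.
  - intros t Ht. unfold scal; simpl; unfold mult; simpl. unfold gamma_density.
    replace (- ((INR j + 1) * t)) with (- t + INR j * - t) by ring.
    rewrite exp_plus, exp_INR_mul. field.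
    apply INR_fact_neq_0.
  - unfold scal; simpl; unfold mult; simpl. unfold frac_moment_coef. field.
    apply INR_fact_neq_0.
Qed.

Lemma is_RInt_gen_gamma_density_partial N :
  is_RInt_gen
    (fun t => gamma_density t * sum_f_R0 (fun j => exp (- t) ^ j / INR (Factorial.fact j)) N)
    (at_right 0) (Rbar_locally p_infty) (Gamma g * sum_f_R0 (frac_moment_coef g) N).
Proof.
  induction N as [|N IH]; cbn [sum_f_R0]; [apply is_RInt_gen_gamma_density_term|].
  generalize (is_RInt_gen_plus _ _ _ _ IH (is_RInt_gen_gamma_density_term (S N))).
  apply is_RInt_gen_ext_pos; [intros; unfold plus; simpl; ring | unfold plus; simpl; ring].
Qed.

Definition exp_exp_density (t : R) : R := gamma_density t * exp (exp (- t)).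

Lemma continuous_exp_exp_density t : 0 < t -> continuous exp_exp_density t.
Proof.
  intros Ht. apply (continuous_mult gamma_density (fun x => exp (exp (- x)))).
  - now apply continuous_gamma_density.
  - apply (@ex_derive_continuous R_AbsRing R_NormedModule). auto_derive. auto.
Qed.

Lemma exp_exp_density_bounds t : 0 < t ->
  0 <= exp_exp_density t <= exp 1 * gamma_density t.
Proof.
  intros Ht. unfold exp_exp_density. assert (Hd := gamma_density_pos t).
  assert (exp (exp (- t)) <= exp 1).
  { left. apply exp_increasing. rewrite <- exp_0. apply exp_increasing. lra. }
  split; [left; apply Rmult_lt_0_compat; [lra | apply exp_pos]|].
  rewrite Rmult_comm. apply Rmult_le_compat_r; lra.
Qed.

Lemma exp_exp_density_sub_partial N t : 0 < t ->
  Rabs (exp_exp_density t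
        - gamma_density t * sum_f_R0 (fun j => exp (- t) ^ j / INR (Factorial.fact j)) N)
  <= (exp 1 - sum_f_R0 (fun j => 1 ^ j / INR (Factorial.fact j)) N) * gamma_density t.
Proof.
  intros Ht. assert (Hd := gamma_density_pos t).
  assert (Hy : 0 <= exp (- t) <= 1)
    by (split; [left; apply exp_pos | rewrite <- exp_0; left; apply exp_increasing; lra]).
  destruct (exp_sub_taylor_bounds _ N Hy) as [Hlo Hhi].
  unfold exp_exp_density. rewrite <- Rmult_minus_distr_l, Rabs_mult, !Rabs_pos_eq by lra.
  rewrite Rmult_comm. apply Rmult_le_compat_r; lra.
Qed.

Lemma ex_RInt_gen_exp_exp_density :
  exists l, is_RInt_gen exp_exp_density (at_right 0) (Rbar_locally p_infty) l.
Proof.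
  destruct (is_RInt_gen_nonneg_bounded exp_exp_density continuous_exp_exp_density
              (fun t Ht => proj1 (exp_exp_density_bounds t Ht)) (exp 1 * (1 / g + 1)))
    as (l & Hl & _); [|now exists l].
  intros a b Hab.
  assert (Hgd : ex_RInt gamma_density a b) by (apply ex_RInt_gamma_density; lra).
  apply Rle_trans with (RInt (fun t => exp 1 * gamma_density t) a b).
  - apply RInt_le; [lra | apply ex_RInt_pos; [exact continuous_exp_exp_density | lra | lra]
                   | exact (ex_RInt_scal (V := R_NormedModule) _ a b (exp 1) Hgd) |].
    intros x Hx. apply exp_exp_density_bounds. lra.
  - replace (RInt (fun t => exp 1 * gamma_density t) a b) with (exp 1 * RInt gamma_density a b)
      by (symmetry; exact (RInt_scal (V := R_CompleteNormedModule) _ a b (exp 1) Hgd)).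
    apply Rmult_le_compat_l; [left; apply exp_pos | now apply RInt_gamma_density_le].
Qed.

(* exp(e^(-t)) = sum_j e^(-jt)/j!, integrated term by term with the scaled Gamma integrals. *)
Lemma is_RInt_gen_exp_exp_density :
  is_RInt_gen exp_exp_density (at_right 0) (Rbar_locally p_infty)
    (Gamma g * Series (frac_moment_coef g)).
Proof.
  destruct ex_RInt_gen_exp_exp_density as (l & Hl).
  replace (Gamma g * Series (frac_moment_coef g)) with l; [exact Hl|].
  apply (is_RInt_gen_lim_approx (Fa := at_right 0) (Fb := Rbar_locally p_infty)
           exp_exp_density gamma_density
           (fun N t => gamma_density t
                       * sum_f_R0 (fun j => exp (- t) ^ j / INR (Factorial.fact j)) N)
           (fun N => exp 1 - sum_f_R0 (fun j => 1 ^ j / INR (Factorial.fact j)) N)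
           (fun N => Gamma g * sum_f_R0 (frac_moment_coef g) N)
           l (Gamma g)).
  - apply (filter_prod_0_pinfty (fun a b => a <= b) 1 1 Rlt_0_1). intros; lra.
  - intros N.
    apply (filter_prod_0_pinfty (fun a b => forall x, a <= x <= b -> _) 1 1 Rlt_0_1).
    intros a b Ha Hb x Hx. apply exp_exp_density_sub_partial. lra.
  - exact Hl.
  - exact is_RInt_gen_Gamma.
  - exact is_RInt_gen_gamma_density_partial.
  - apply (is_lim_seq_scal_l _ (Gamma g) (Series (frac_moment_coef g))).
    apply is_lim_seq_sum_f_R0, Series_correct, ex_series_frac_moment_coef, hg.
  - replace (Finite 0) with (Finite (exp 1 - exp 1)) by (f_equal; ring).
    apply is_lim_seq_minus'; [apply is_lim_seq_const | apply is_lim_seq_sum_f_R0, is_series_exp].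
Qed.

(* The substitution x = exp(-t). *)
Lemma is_RInt_gen_log_integral :
  is_RInt_gen (fun x => exp x / Rpower (- ln x) (1 - g)) (at_right 0) (at_left 1)
    (Gamma g * Series (frac_moment_coef g)).
Proof.
  assert (Hright : at_right 0 (fun a => 0 < a < 1)) by (apply (at_right_intro 0 1); intros; lra).
  assert (Hleft : at_left 1 (fun b => 0 < b < 1)) by (apply (at_left_intro 1 1); intros; lra).
  assert (Hintegrand : forall x, 0 < x < 1 ->
            opp (- / x * exp_exp_density (- ln x)) = exp x / Rpower (- ln x) (1 - g)).
  { intros x Hx. unfold opp; simpl. unfold exp_exp_density, gamma_density.
    rewrite Ropp_involutive, exp_ln by lra.
    replace (g - 1) with (- (1 - g)) by ring. rewrite Rpower_Ropp.
    field. split; [apply Rgt_not_eq, Rpower_pos | lra]. }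
  assert (Hsub : is_RInt_gen (fun x => - / x * exp_exp_density (- ln x))
                   (at_right 0) (at_left 1) (opp (Gamma g * Series (frac_moment_coef g)))).
  { apply (is_RInt_gen_comp exp_exp_density (fun x => - ln x) (fun x => - / x)
             (Ga := Rbar_locally p_infty) (Gb := at_right 0)).
    - apply (filter_prod_open_interval 0 1 _ Hright Hleft). intros x Hx.
      assert (ln x < 0) by (rewrite <- ln_1; apply ln_increasing; lra).
      split; [apply continuous_exp_exp_density; lra|].
      split; [auto_derive; [lra | field; lra]|].
      apply (@ex_derive_continuous R_AbsRing R_NormedModule). auto_derive. lra.
    - exact filterlim_opp_ln_at_right_0.
    - exact filterlim_opp_ln_at_left_1.
    - exact (is_RInt_gen_swap (V := R_NormedModule) _ _ is_RInt_gen_exp_exp_density). }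
  apply is_RInt_gen_opp in Hsub. rewrite opp_opp in Hsub. revert Hsub.
  apply is_RInt_gen_ext.
  eapply filter_imp; [|apply (filter_prod_open_interval 0 1 _ Hright Hleft Hintegrand)].
  intros [a b] H x Hx. apply H. lra.
Qed.

End GammaIntegrals.

Theorem mainTheorem12 (g : R) (hg0 : 0 < g) (hg1 : g < 1) :
  alpha (phi g) =
  Finite (/ (exp 1 * Gamma g) *
          RInt_gen (fun x => exp x / Rpower (- ln x) (1 - g))
                   (at_right 0) (at_left 1)).
Proof.
  assert (Hg : 0 < g < 1) by lra.
  rewrite (is_RInt_gen_unique _ _ (is_RInt_gen_log_integral g Hg)).
  replace (/ (exp 1 * Gamma g) * (Gamma g * Series (frac_moment_coef g)))
    with (poisson_ratio (phi g) 1).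
  2:{ rewrite poisson_ratio_1 by exact Hg.
      replace (-1) with (- (1)) by ring. rewrite exp_Ropp.
      field. split; apply Rgt_not_eq; [apply Gamma_pos, Hg | apply exp_pos]. }
  apply is_glb_Rbar_unique. split.
  - intros r (n & Hn & ->). now apply poisson_ratio_min.
  - intros b Hb. apply Hb. exists 1%nat. split; [lia | reflexivity].
Qed.
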